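(* Let $R$ be a ring and $u\in R$. Suppose that $m:=\mathrm{char}(R)$ is finite and $J(R)$ is a nil ideal of index $s+1$, where $s\geq 0$. If $u^t-1\in J(R)$ for some $t\in\mathbb{N}$, then $u^{tm^s}=1$.
   Context: All rings are associative with identity; $\mathrm{char}(R):=|1\cdot\mathbb{Z}|$. A nil ideal $I$ is nil of index $k$ if $r^k=0$ for all $r\in I$ and $k$ is the minimal natural number with this property. *)

(* Rings: pzRingType = associative ring with identity
   (the zero ring allowed). *)
From HB Require Import structures.
From mathcomp Require Import all_boot all_order all_algebra.
Set Implicit Arguments. Unset Strict Implicit. Unset Printing Implicit Defensive.
Import GRing.Theory.
Local Open Scope ring_scope.

Definition left_ideal (R : pzRingType) (I : R -> Prop) : Prop :=
  I 0 /\ (forall x y, I x -> I y -> I (x + y)) /\ (forall r x, I x -> I (r * x)).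

Definition maximal_left_ideal (R : pzRingType) (I : R -> Prop) : Prop :=
  [/\ left_ideal I, ~ I 1 &
      forall K : R -> Prop, left_ideal K -> ~ K 1 ->
        (forall x, I x -> K x) -> forall x, K x -> I x].

Definition jacobson (R : pzRingType) : R -> Prop :=
  fun x => forall I : R -> Prop, maximal_left_ideal I -> I x.

Definition nil_of_index (R : pzRingType) (I : R -> Prop) (k : nat) : Prop :=
  (forall r, I r -> r ^+ k = 0) /\
  (forall k', (0 < k')%N -> (forall r, I r -> r ^+ k' = 0) -> (k <= k')%N).

Definition char_is (R : pzRingType) (m : nat) : Prop :=
  [/\ (0 < m)%N, (m%:R : R) = 0 &
      forall k, (0 < k)%N -> (k%:R : R) = 0 -> (m <= k)%N].

From HB Require Import structures.
From mathcomp Require Import all_boot all_order all_algebra.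
Set Implicit Arguments. Unset Strict Implicit. Unset Printing Implicit Defensive.
Import GRing.Theory.
Local Open Scope ring_scope.

(* Since [m = 0] in [R], the binomial expansion of [(x + 1)^m] has no linear
   term, so [(x + 1)^m = 1 + x^2 y] with [y] a polynomial in [x]; as [y]
   commutes with [x], [(x^2 y)^k = x^(2k) y^k] even in a noncommutative ring.
   Iterating [n] times puts [(x + 1)^(m^n)] in [1 + x^(2^n) R], and
   [x^(2^n) = 0] as soon as [x^(n+1) = 0].  Apply this to [x = u^t - 1],
   which lies in the nil ideal [J(R)] of index [s + 1]. *)

Section CharacteristicBinomial.

Variables (R : pzRingType) (m : nat).
Hypothesis m_eq0 : m%:R = 0 :> R.

Lemma exprD1n_natr0 (x : R) :
  exists2 y, GRing.comm x y & (x + 1) ^+ m = x ^+ 2 * y + 1.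
Proof.
case: m m_eq0 => [_ | k k_eq0]; first by exists 0; [exact: commr0 | rewrite mulr0 add0r].
exists (\sum_(i < k) x ^+ i *+ 'C(k.+1, i.+2)).
  by apply: commr_sum => i _; apply/commrMn/commrX/commr_refl.
rewrite exprD1n 2!big_ord_recl expr0 bin0 mulr1n expr1 bin1 -mulr_natr k_eq0 mulr0.
rewrite add0r addrC; congr (_ + _).
by rewrite mulr_sumr; apply: eq_bigr => i _; rewrite mulrnAr -exprD.
Qed.

Lemma exprD1n_natr0_iter (n : nat) (x : R) :
  exists y, (x + 1) ^+ (m ^ n) = x ^+ (2 ^ n) * y + 1.
Proof.
elim: n x => [|n IHn] x; first by exists 1; rewrite !expn0 !expr1 mulr1.
rewrite expnS exprM; have [y cxy ->] := exprD1n_natr0 x.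
have [z ->] := IHn (x ^+ 2 * y).
exists (y ^+ (2 ^ n) * z).
rewrite exprMn_comm; last exact/commr_sym/commrX/commr_sym.
by rewrite -exprM -expnS mulrA.
Qed.

Lemma exprD1n_nilpotent (n : nat) (x : R) :
  x ^+ n.+1 = 0 -> (x + 1) ^+ (m ^ n) = 1.
Proof.
move=> xn_eq0; have [y ->] := exprD1n_natr0_iter n x.
by rewrite -(subnKC (ltn_expl n (ltnSn 1))) exprD xn_eq0 !mul0r add0r.
Qed.

End CharacteristicBinomial.

Theorem lemma2p10 (R : pzRingType) (u : R) (m s t : nat) :
  char_is R m ->
  nil_of_index (@jacobson R) s.+1 ->
  jacobson (u ^+ t - 1) ->
  u ^+ (t * m ^ s) = 1.
Proof.
move=> [_ m_eq0 _] [J_nil _] J_ut1.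
by rewrite exprM -[u ^+ t](subrK 1) (exprD1n_nilpotent m_eq0) ?J_nil.
Qed.
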